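(* Let $D$ be an oriented graph and let $P=(u,w_1,\ldots,w_q,v)$ be a directed $(u,v)$-path in $D$ that is not a shortest directed $(u,v)$-path, for some $q\geq 1$, such that $d_D^-(w_i)=d_D^+(w_i)=1$ for every $i\in\{1,\ldots,q\}$. Then any minimum hull set of $D$ in the geodetic convexity contains at least one of the vertices $w_1,\ldots,w_q$.
   Context: An oriented graph is an orientation of a finite simple graph; $d_D^-$ and $d_D^+$ denote in- and out-degree. The geodetic interval function $I_g(u,v)$ is the set of vertices on some shortest directed $(u,v)$-path or some shortest directed $(v,u)$-path. For $S\subseteq V(D)$, $I_g(S)=\bigcup_{u,v\in S}I_g(u,v)$; $C$ is convex if $I_g(C)=C$; the convex hull of $S$ is the smallest convex set containing $S$; a hull set is a set whose convex hull is $V(D)$; a minimum hull set is one of minimum size. *)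

From mathcomp Require Import all_boot.
Set Implicit Arguments. Unset Strict Implicit. Unset Printing Implicit Defensive.

Section Geodetic.
Variables (T : finType) (a : rel T).

Definition oriented : Prop :=
  (forall x, ~~ a x x) /\ (forall x y, a x y -> ~~ a y x).

Definition indeg (x : T) : nat := #|[set y | a y x]|.
Definition outdeg (x : T) : nat := #|[set y | a x y]|.

(* directed (u,v)-path with vertex sequence u :: s, of length size s *)
Definition dpath (u v : T) (s : seq T) : bool :=
  [&& path a u s, last u s == v & uniq (u :: s)].

Definition shortest_dpath (u v : T) (s : seq T) : Prop :=
  dpath u v s /\ forall s', dpath u v s' -> size s <= size s'.

Definition in_Ig (u v z : T) : Prop :=
  (exists s, shortest_dpath u v s /\ z \in u :: s) \/
  (exists s, shortest_dpath v u s /\ z \in v :: s).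

Definition in_IgS (S : {set T}) (z : T) : Prop :=
  exists u v, [/\ u \in S, v \in S & in_Ig u v z].

Definition convex (C : {set T}) : Prop := forall z, in_IgS C z <-> z \in C.

Definition convex_hull (S H : {set T}) : Prop :=
  [/\ convex H, S \subset H &
      forall C, convex C -> S \subset C -> H \subset C].

Definition hull_set (S : {set T}) : Prop := convex_hull S setT.

Definition min_hull_set (S : {set T}) : Prop :=
  hull_set S /\ forall S', hull_set S' -> #|S| <= #|S'|.

End Geodetic.

From mathcomp Require Import all_boot.

(* The inner vertices w_1, ..., w_q have a single in-neighbour and a single
   out-neighbour, so a walk that enters the chain u, w_1, ..., w_q, v from
   outside must traverse all of it.  A shortest path joining two vertices off
   the chain would thus contain the chain as a subpath, and subpaths of
   shortest paths are shortest; since the chain is not a shortest (u,v)-path,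
   the complement of {w_1, ..., w_q} is convex, and no hull set fits inside a
   proper convex set. *)

Section GeodeticHull.
Set Implicit Arguments. Unset Strict Implicit.
Variables (T : finType) (a : rel T).

Lemma indeg1_eq w y y' : indeg a w = 1 -> a y w -> a y' w -> y = y'.
Proof. by move/eq_leq/card_le1_eqP=> deg1 a_yw a_y'w; apply: deg1; rewrite inE. Qed.

Lemma outdeg1_eq w y y' : outdeg a w = 1 -> a w y -> a w y' -> y = y'.
Proof. by move/eq_leq/card_le1_eqP=> deg1 a_wy a_wy'; apply: deg1; rewrite inE. Qed.

Lemma dpath_shorten x t : path a x t ->
  exists2 t', dpath a x (last x t) t' & size t' <= size t.
Proof.
case/shortenP=> t' t'_path t'_uniq t'_sub; exists t'.
  by rewrite /dpath t'_path eqxx.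
by apply: uniq_leq_size t'_sub; case/andP: t'_uniq.
Qed.

Lemma shortest_dpath_refl x : shortest_dpath a x x [::].
Proof. by split=> [|s _]; rewrite /dpath ?eqxx. Qed.

Lemma shortest_dpath_infix x y s1 m s2 :
  shortest_dpath a x y (s1 ++ m ++ s2) ->
  shortest_dpath a (last x s1) (last (last x s1) m) m.
Proof.
set w := last x s1; case=> /and3P[s_path /eqP s_last s_uniq] s_min.
move: s_path; rewrite !cat_path -/w => /and3P[s1_path m_path s2_path].
split=> [|m' /and3P[m'_path /eqP m'_last _]].
  move: s_uniq; rewrite -cat_cons catA cat_uniq => /andP[].
  rewrite cat_uniq /= => /and3P[_ s1_m_disjoint m_uniq] _.
  rewrite /dpath m_path eqxx /= m_uniq andbT.
  by apply: contra s1_m_disjoint => w_m; apply/hasP; exists w; rewrite ?mem_last.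
have walk_path : path a x (s1 ++ m' ++ s2).
  by rewrite !cat_path s1_path -/w m'_path m'_last s2_path.
have [t] := dpath_shorten walk_path.
rewrite !last_cat -/w in s_last *; rewrite m'_last s_last => /s_min.
rewrite !size_cat => /leq_trans le_size /le_size.
by rewrite leq_add2l leq_add2r.
Qed.

Lemma outdeg1_path_prefix x c t :
  path a x c -> {in belast x c, forall w, outdeg a w = 1} ->
  path a x t -> last x t \notin belast x c ->
  exists t2, t = c ++ t2.
Proof.
elim: c x t => [|y c IHc] x t; first by exists t.
case: t => [|y' t] /= /andP[a_xy c_path] deg1; first by rewrite mem_head.
case/andP=> /(outdeg1_eq (deg1 x (mem_head _ _)) a_xy) <- t_path.
rewrite inE negb_or => /andP[_ t_last].
have deg1_c : {in belast y c, forall w, outdeg a w = 1}.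
  by move=> w w_c; apply: deg1; rewrite inE w_c orbT.
by have [t2 ->] := IHc y t c_path deg1_c t_path t_last; exists t2.
Qed.

Lemma indeg1_path_suffix x y c t :
  path a y c -> {in c, forall w, indeg a w = 1} ->
  path a x t -> last x t = last y c -> x \notin c ->
  exists2 t1, t = t1 ++ c & last x t1 = y.
Proof.
elim/last_ind: c t => [|c e IHc] t.
  by move=> _ _ _ t_last _; exists t; rewrite ?cats0.
rewrite rcons_path last_rcons => /andP[c_path a_ce] deg1.
case/lastP: t => [|t e'] /=; first by move=> _ ->; rewrite mem_rcons mem_head.
rewrite rcons_path last_rcons mem_rcons inE negb_or.
move=> /andP[t_path a_te] e'_e /andP[_ x_c]; subst e'.
have deg1_c : {in c, forall w, indeg a w = 1}.
  by move=> w w_c; apply: deg1; rewrite mem_rcons inE w_c orbT.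
have e_deg1 : indeg a e = 1 by apply: deg1; rewrite mem_rcons mem_head.
have t_last := indeg1_eq e_deg1 a_te a_ce.
have [t1 -> t1_last] := IHc t c_path deg1_c t_path t_last x_c.
by exists t1; rewrite ?rcons_cat.
Qed.

Lemma convex_shortest_closed (C : {set T}) :
  (forall x y s, x \in C -> y \in C -> shortest_dpath a x y s ->
     {subset x :: s <= C}) ->
  convex a C.
Proof.
move=> closed z; split=> [[x [y [x_C y_C]]] | z_C].
  case=> [[s [s_short z_s]] | [s [s_short z_s]]].
    exact: closed x_C y_C s_short _ z_s.
  exact: closed y_C x_C s_short _ z_s.
exists z, z; split=> //; left; exists [::].
by split; [apply: shortest_dpath_refl | apply: mem_head].
Qed.

Lemma hull_set_subset_convex (S C : {set T}) :
  hull_set a S -> convex a C -> S \subset C -> C = setT.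
Proof.
by case=> _ _ hullS convC sSC; apply/eqP; rewrite eqEsubset subsetT hullS.
Qed.

Section DegreeOneChain.
Variables (u v : T) (ws : seq T).
Hypothesis chain_path : path a u (rcons ws v).
Hypothesis ws_indeg : {in ws, forall w, indeg a w = 1}.
Hypothesis ws_outdeg : {in ws, forall w, outdeg a w = 1}.

Lemma path_through_chain x s z :
  path a x s -> x \notin ws -> last x s \notin ws -> z \in ws -> z \in s ->
  exists s1 s2, s = s1 ++ rcons ws v ++ s2 /\ last x s1 = u.
Proof.
move=> s_path x_ws s_last z_ws z_s.
move: s_path s_last; case/splitPr: z_s => p1 p2.
rewrite cat_path last_cat /= => /and3P[p1_path a_p1z p2_path] p2_last.
have [r1 [r2 def_ws]] : exists r1 r2, ws = r1 ++ z :: r2.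
  by case/splitPr: z_ws => r1 r2; exists r1, r2.
have r1_sub : {subset rcons r1 z <= ws}.
  by move=> w w_r1; rewrite def_ws -cat_rcons mem_cat w_r1.
have r2_sub : {subset z :: r2 <= ws}.
  by move=> w w_r2; rewrite def_ws mem_cat w_r2 orbT.
move: chain_path; rewrite def_ws rcons_cat rcons_cons -cat_rcons cat_path.
rewrite last_rcons => /andP[r1_path r2_path].
have [t1 p1_z t1_last] : exists2 t1, rcons p1 z = t1 ++ rcons r1 z & last x t1 = u.
  apply: indeg1_path_suffix r1_path _ _ _ _; rewrite ?rcons_path ?p1_path ?a_p1z //.
  - by move=> w /r1_sub; apply: ws_indeg.
  - by rewrite !last_rcons.
  - by apply: contra x_ws; apply: r1_sub.
have [s2 p2_def] : exists s2, p2 = rcons r2 v ++ s2.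
  apply: outdeg1_path_prefix r2_path _ p2_path _; rewrite belast_rcons.
    by move=> w /r2_sub; apply: ws_outdeg.
  by apply: contra p2_last; apply: r2_sub.
have p1_def : p1 = t1 ++ r1 by apply: (@rcons_injl _ z); rewrite rcons_cat.
exists t1, s2; split=> //.
by rewrite p1_def p2_def -!catA -cat_rcons.
Qed.

Hypothesis chain_not_shortest : ~ shortest_dpath a u v (rcons ws v).

Lemma shortest_dpath_avoid_chain x y s :
  x \notin ws -> y \notin ws -> shortest_dpath a x y s ->
  {subset x :: s <= [predC ws]}.
Proof.
move=> x_ws y_ws s_short z; rewrite inE /= => /predU1P[-> // | z_s].
apply/negP=> z_ws; apply: chain_not_shortest.
have [/and3P[s_path /eqP s_last _] _] := s_short.
rewrite -s_last in y_ws.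
have [s1 [s2 [def_s s1_last]]] := path_through_chain s_path x_ws y_ws z_ws z_s.
by move: s_short; rewrite def_s => /shortest_dpath_infix; rewrite s1_last last_rcons.
Qed.

Lemma convex_chain_complement : convex a [set w | w \notin ws].
Proof.
apply: convex_shortest_closed => x y s; rewrite !inE => x_ws y_ws s_short z z_s.
by rewrite inE; apply: shortest_dpath_avoid_chain s_short z z_s.
Qed.

End DegreeOneChain.

End GeodeticHull.

Theorem proposition4 (T : finType) (a : rel T) (u v : T) (ws : seq T) :
  oriented a ->
  0 < size ws ->
  dpath a u v (rcons ws v) ->
  ~ shortest_dpath a u v (rcons ws v) ->
  (forall w, w \in ws -> indeg a w = 1 /\ outdeg a w = 1) ->
  forall S : {set T}, min_hull_set a S -> exists2 w, w \in ws & w \in S.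
Proof.
move=> _ ws_nonempty /and3P[chain_path _ _] chain_not_shortest ws_deg S [S_hull _].
have convC := convex_chain_complement chain_path
  (fun w w_ws => (ws_deg w w_ws).1) (fun w w_ws => (ws_deg w w_ws).2)
  chain_not_shortest.
have [sSC | /subsetPn[w w_S]] := boolP (S \subset [set w | w \notin ws]).
  have /setP/(_ (nth v ws 0)) := hull_set_subset_convex S_hull convC sSC.
  by rewrite !inE mem_nth.
by rewrite inE negbK => w_ws; exists w.
Qed.
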